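(* Let $p$ be a prime and $n \geq 2$. Let $N$ be the cyclic group of order $p^n$, let $K$ be the Sylow $p$-subgroup of $\mathrm{Aut}(N)$, and let $G := N \rtimes K$ (with the natural action). Then $G$ is weakly-top.
   Context: For a group $H$, $H'$ denotes its commutator subgroup. A finite group $G$ is weakly-top if $|H/H'| \leq |G/G'|$ for every proper subgroup $H<G$. *)

From mathcomp Require Import all_boot all_fingroup all_solvable.
Set Implicit Arguments. Unset Strict Implicit. Unset Printing Implicit Defensive.
Local Open Scope group_scope.

Definition weakly_top (gT : finGroupType) (G : {group gT}) : Prop :=
  forall H : {group gT}, H \proper G -> #|H / H^`(1)| <= #|G / G^`(1)|.

From mathcomp Require Import all_boot all_fingroup all_solvable.
Set Implicit Arguments. Unset Strict Implicit. Unset Printing Implicit Defensive.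
Local Open Scope group_scope.

(* Every subgroup H of G has |H/H'| <= |N|.  Indeed M := H :&: N is 'C_H(N), and
   |H : M| is the size of the H-class of a generator x of N, which injects into
   [N, H] via y |-> x^-1 y.  The |N : M|-th power map sends the cyclic group
   [N, H] into [M, H] <= H' (as [y, h]^k = [y^k, h] in N), and its kernel has
   order at most |N : M|, so |H| <= |M| |N : M| |H'| = |N| |H'|.
   Conversely, K embeds in the abelian group Aut N, so G is a p-group of order
   p^(2n-1) with G' <= [N, G] < N; hence |G'| <= p^(n-1) = |K| and
   |G/G'| >= |N|. *)

Section SubgroupAbelianization.

Variable gT : finGroupType.
Implicit Types (x : gT) (D E G H K M N : {group gT}).

Lemma order_le_mul_orderX x k : 0 < k -> #[x] <= k * #[x ^+ k].
Proof.
move=> k_gt0; rewrite orderXgcd -{1}(divnK (dvdn_gcdl #[x] k)) mulnC leq_mul2r.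
by rewrite dvdn_leq ?dvdn_gcdr ?orbT.
Qed.

Lemma card_cyclic_le_expg D E k :
  cyclic D -> 0 < k -> {in D, forall d, d ^+ k \in E} -> #|D| <= k * #|E|.
Proof.
case/cyclicP=> d -> k_gt0 DkE; rewrite -orderE.
apply: leq_trans (order_le_mul_orderX d k_gt0) _; rewrite leq_mul2l orderE.
by rewrite subset_leq_card ?orbT // cycle_subG DkE ?cycle_id.
Qed.

Lemma expg_indexg_mem N M y : N \subset 'N(M) -> y \in N -> y ^+ #|N : M| \in M.
Proof.
move=> nMN Ny; have nMy := subsetP nMN y Ny.
apply: coset_idr; first by rewrite groupX.
by rewrite morphX // -card_quotient // expg_cardG // mem_quotient.
Qed.

Lemma index_cent1_le_commg x H : #|H : 'C_H[x]| <= #|[~: <[x]>, H]|.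
Proof.
rewrite index_cent1 -(card_lcoset _ x^-1) subset_leq_card //.
apply/subsetP=> _ /lcosetP[_ /imsetP[h Hh ->] ->].
by rewrite mem_commg ?cycle_id.
Qed.

Lemma commg_expg_mem N H M k :
  cyclic N -> H \subset 'N(N) -> {in N, forall y, y ^+ k \in M} ->
  {in [~: N, H], forall d, d ^+ k \in [~: M, H]}.
Proof.
case/cyclicP=> x ->; set X := <[x]> => nXH XkM d Dd.
have sDX : [~: X, H] \subset X by rewrite commg_subl.
suff: cyclem k x @* [~: X, H] \subset [~: M, H].
  by move/subsetP; apply; rewrite -[d ^+ k]/(cyclem k x d) mem_morphim ?(subsetP sDX).
rewrite morphim_gen; last by rewrite -gen_subG.
rewrite gen_subG; apply/subsetP=> _ /morphimP[_ _ /imset2P[y h Xy Hh ->] ->] /=.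
have Xyh : [~ y, h] \in X by rewrite (subsetP sDX) ?mem_commg.
by rewrite /cyclem -commXg ?mem_commg ?XkM //; apply: (centsP (cycle_abelian x)).
Qed.

Lemma card_abelianization_le_cyclic N H :
  cyclic N -> H \subset 'N(N) -> 'C_H(N) \subset N -> #|H / H^`(1)| <= #|N|.
Proof.
move=> cycN nNH cHN; have [x defN] := cyclicP cycN.
set M := (H :&: N)%G; set E := [~: M, H].
have defM : 'C_H(N) = M.
  apply/eqP; rewrite eqEsubset /M /= subsetI subsetIl cHN setIS //.
  exact: cyclic_abelian.
have le_HM_D : #|H : M| <= #|[~: N, H]|.
  by rewrite -defM defN cent_cycle index_cent1_le_commg.
have le_D_E : #|[~: N, H]| <= #|N : M| * #|E|.
  apply: card_cyclic_le_expg; first by rewrite (cyclicS _ cycN) ?commg_subl.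
    exact: indexg_gt0.
  apply: commg_expg_mem => // y Ny; apply: expg_indexg_mem => //.
  exact: sub_abelian_norm (cyclic_abelian cycN) (subsetIr _ _).
have le_E_H' : #|E| <= #|H^`(1)|.
  by rewrite subset_leq_card // derg1 commgSS ?subsetIl.
have le_H : #|H| <= #|N| * #|H^`(1)|.
  rewrite -(Lagrange (subsetIl H N)) -(Lagrange (subsetIr H N)) -mulnA leq_mul2l.
  by rewrite (leq_trans le_HM_D) ?(leq_trans le_D_E) ?leq_mul2l ?le_E_H' ?orbT.
rewrite -(leq_pmul2r (cardG_gt0 H^`(1))) card_quotient ?der_norm //.
by rewrite mulnC Lagrange ?der_sub.
Qed.

Lemma card_Syl_Aut_cyclic p n N (P : {group {perm gT}}) :
  prime p -> 0 < n -> cyclic N -> #|N| = (p ^ n)%N ->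
  P \in 'Syl_p(Aut N) -> #|P| = (p ^ n.-1)%N.
Proof.
move=> pr_p n_gt0 cycN oN; rewrite inE => /card_Hall ->.
rewrite card_Aut_cyclic // oN totient_pfactor // p_part logn_Gauss ?pfactorK //.
by rewrite coprimenP ?prime_gt0.
Qed.

Lemma injm_restrm_conj_aut N K (nNK : K \subset 'N(N)) :
  'C_K(N) = 1 -> 'injm (restrm nNK (conj_aut N)).
Proof. by move=> cKN; rewrite ker_restrm ker_conj_aut cKN. Qed.

Lemma sdprod_subcent_abelian G N K :
  N ><| K = G -> abelian N -> 'C_G(N) = N * 'C_K(N).
Proof. by move/sdprodW=> <- abN; rewrite group_modl. Qed.

Lemma der1_sdprod_abelian G N K :
  N ><| K = G -> abelian N -> abelian K -> G^`(1) \subset [~: N, G].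
Proof.
move=> defG abN abK; have [/andP[sNG nNG] sKG defNK _ _] := sdprod_context defG.
have nRG : G \subset 'N([~: N, G]) by rewrite normsR ?normG.
apply: der1_min => //.
have -> : G / [~: N, G] = N / [~: N, G] * (K / [~: N, G]).
  by rewrite -quotientMl ?defNK ?(subset_trans sNG).
by rewrite abelianM !quotient_abelian // centsC quotient_cents2r // commgS.
Qed.

Lemma proper_pgroup_card p H N :
  prime p -> p.-group N -> H \proper N -> #|H| * p <= #|N|.
Proof.
move=> pr_p pN ltHN; have pH := pgroupS (proper_sub ltHN) pN.
rewrite (card_pgroup pN) (card_pgroup pH) -expnSr leq_exp2l ?prime_gt1 //.
exact: properG_ltn_log pN ltHN.
Qed.

Lemma card_der1_sdprod_pgroup p G N K :
  prime p -> p.-group G -> N ><| K = G -> N :!=: 1 -> abelian N -> abelian K ->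
  #|G^`(1)| * p <= #|N|.
Proof.
move=> pr_p pG defG ntN abN abK; have [/andP[sNG nNG] _ _ _ _] := sdprod_context defG.
apply: proper_pgroup_card pr_p (pgroupS sNG pG) _.
apply: sub_proper_trans (der1_sdprod_abelian defG abN abK) _.
by apply: (nil_comm_properl (pgroup_nil pG)); rewrite // subsetI subxx.
Qed.

Lemma sdprod_card_le_abelianization G N K :
  N ><| K = G -> #|G^`(1)| <= #|K| -> #|N| <= #|G / G^`(1)|.
Proof.
move=> defG leG'K; rewrite -(leq_pmul2r (cardG_gt0 G^`(1))).
rewrite card_quotient ?der_norm // (mulnC #|G : _|) Lagrange ?der_sub //.
by rewrite -(sdprod_card defG) leq_mul2l leG'K orbT.
Qed.

End SubgroupAbelianization.

Theorem lemma2p8 (gT : finGroupType) (G N K : {group gT}) (p n : nat) :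
  prime p -> (2 <= n)%N ->
  cyclic N -> #|N| = (p ^ n)%N ->
  N ><| K = G ->
  'C_K(N) = 1 ->
  (conj_aut N @* K)%G \in 'Syl_p(Aut N) ->
  weakly_top G.
Proof.
move=> pr_p n_ge2 cycN oN defG cKN sylK; have n_gt0 := ltnW n_ge2.
have [nsNG _ _ nNK _] := sdprod_context defG.
have abN := cyclic_abelian cycN; have injK := injm_restrm_conj_aut nNK cKN.
have oK : #|K| = (p ^ n.-1)%N.
  rewrite -(card_injm injK) // morphim_restrm setIid.
  exact: card_Syl_Aut_cyclic sylK.
have abK : abelian K.
  rewrite -(injm_abelian injK) // morphim_restrm setIid.
  exact: abelianS (Aut_conj_aut _ _) (Aut_cyclic_abelian cycN).
have pG : p.-group G.
  by rewrite /pgroup -(sdprod_card defG) oN oK -expnD pnatX pnat_id.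
have ntN : N :!=: 1 by rewrite -cardG_gt1 oN -(expn0 p) ltn_exp2l ?prime_gt1.
have leG'K : #|G^`(1)| <= #|K|.
  rewrite -(leq_pmul2r (prime_gt0 pr_p)) oK -expnSr prednK // -oN.
  exact: card_der1_sdprod_pgroup pG defG ntN abN abK.
move=> H /proper_sub sHG.
apply: leq_trans (sdprod_card_le_abelianization defG leG'K).
apply: card_abelianization_le_cyclic => //.
  exact: subset_trans sHG (normal_norm nsNG).
apply: subset_trans (setSI _ sHG) _.
by rewrite (sdprod_subcent_abelian defG abN) cKN mulg1.
Qed.
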